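(* Let $n\geq 2$. Every cluster of $n$-permutations contains exactly one pair of twin permutations (i.e., exactly one unordered pair $\{\pi,\sigma\}$ of twins with both $\pi$ and $\sigma$ in the cluster).
   Context: An $n$-permutation is a permutation $\pi_1\cdots\pi_n$ of $\{1,\ldots,n\}$. For a word $w$ of distinct numbers, $\mathrm{red}(w)$ is the permutation obtained by replacing the $i$-th smallest letter by $i$. For an $(n-1)$-permutation $\tau$, the cluster with signature $\tau$ is the set of all $n$-permutations $\pi$ with $\mathrm{red}(\pi_1\cdots\pi_{n-1})=\tau$; there are $(n-1)!$ clusters, each with $n$ elements. Two different $n$-permutations $\pi=\pi_1\cdots\pi_n$ and $\sigma=\sigma_1\cdots\sigma_n$ are twins if $\mathrm{red}(\pi_1\cdots\pi_{n-1})=\mathrm{red}(\sigma_1\cdots\sigma_{n-1})$ and $|\pi_n-\pi_1|=|\sigma_n-\sigma_1|=1$. *)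

From mathcomp Require Import all_boot all_fingroup.
Set Implicit Arguments. Unset Strict Implicit. Unset Printing Implicit Defensive.

(* An n-permutation pi_1 ... pi_n of {1,...,n}, as the word of its values.
   A permutation p : 'S_n acts on 'I_n = {0,...,n-1}; we shift by one. *)
Definition pword n (p : 'S_n) : seq nat := [seq (p i).+1 | i <- enum 'I_n].

(* red w : replace the i-th smallest letter of w by i (w of distinct numbers):
   the rank of x in w is the number of letters of w that are <= x. *)
Definition red (w : seq nat) : seq nat := [seq count (fun y => y <= x) w | x <- w].

Definition cluster n (tau : 'S_(n.-1)) : {set 'S_n} :=
  [set pi : 'S_n | red (take n.-1 (pword pi)) == pword tau].

Definition ends_adjacent n (p : 'S_n) : bool :=
  let w := pword p in
  let a := nth 0 w 0 in let b := nth 0 w n.-1 in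
  (a == b.+1) || (b == a.+1).

Definition twins n (p s : 'S_n) : bool :=
  [&& p != s,
      red (take n.-1 (pword p)) == red (take n.-1 (pword s)),
      ends_adjacent p & ends_adjacent s].

Definition twin_pairs_in n (tau : 'S_(n.-1)) : {set {set 'S_n}} :=
  [set P : {set 'S_n} | [&& #|P| == 2, P \subset cluster tau &
     [forall p in P, forall s in P, (p != s) ==> twins p s]]].

From mathcomp Require Import all_boot all_fingroup zify.

Set Implicit Arguments.
Unset Strict Implicit.
Unset Printing Implicit Defensive.

(* A permutation pi in the cluster of tau is determined by its last letter
   v = pi_n: its first n-1 letters are tau_1 ... tau_(n-1) with every letter
   >= v raised by one.  Hence |pi_1 - pi_n| = 1 exactly when v = tau_1 or
   v = tau_1 + 1, so the cluster has exactly two elements with adjacent ends.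
   These two are twins, and every twin in the cluster is one of them. *)

Lemma count_enum_ord m (a : pred 'I_m) : count a (enum 'I_m) = \sum_(i < m) a i.
Proof. by rewrite -sum1_count big_mkcond /= -big_enum. Qed.

Lemma sum_ord_leq m x : \sum_(i < m) (i <= x) = minn m x.+1.
Proof.
elim: m => [|m IHm]; first by rewrite big_ord0.
by rewrite big_ord_recr /= IHm; case: leqP; lia.
Qed.

Lemma sum_perm_leq m (p : 'S_m) (x : 'I_m) : \sum_(i < m) (p i <= x) = x.+1.
Proof.
rewrite [LHS](reindex_inj (@perm_inj _ p^-1)) /=.
under eq_bigr do rewrite permKV.
by rewrite sum_ord_leq; apply/minn_idPr.
Qed.

Lemma red_map_enum_ord m (F : 'I_m -> nat) :
  red [seq F i | i <- enum 'I_m] =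
  [seq \sum_(i < m) (F i <= F j) | j <- enum 'I_m].
Proof.
rewrite /red -map_comp; apply: eq_map => j /=.
by rewrite count_map count_enum_ord.
Qed.

Lemma bump_adjacent v t :
  (bump v t == v.+1) || (v == (bump v t).+1) = (v == t) || (v == t.+1).
Proof. by rewrite /bump; case: leqP; lia. Qed.

Lemma ends_adjacentE n (p : 'S_n.+1) :
  ends_adjacent p =
  (p ord0 == (p ord_max).+1 :> nat) || (p ord_max == (p ord0).+1 :> nat).
Proof.
have nth_pword (i : 'I_n.+1) : nth 0 (pword p) i = (p i).+1.
  by rewrite /pword (nth_map ord0) ?size_enum_ord ?nth_ord_enum.
by rewrite /ends_adjacent (nth_pword ord0) (nth_pword ord_max) !eqSS.
Qed.

Lemma pairs_in_pair (T : finType) (E : {set T}) :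
  #|E| = 2 -> [set P : {set T} | (#|P| == 2) && (P \subset E)] = [set E].
Proof.
move=> cardE; apply/setP => P; rewrite !inE.
apply/andP/eqP => [[/eqP cardP sPE]|->].
  by apply/eqP; rewrite eqEcard sPE cardE cardP.
by rewrite cardE subxx.
Qed.

Section Cluster.

Variables (k : nat) (tau : 'S_k.+1).

Notation widen j := (widen_ord (leqnSn k.+1) j : 'I_k.+2).
Notation cluster := (@cluster k.+2 tau).

Lemma widen_lift (j : 'I_k.+1) : widen j = lift ord_max j.
Proof. by apply: val_inj; rewrite /= /bump leqNgt ltn_ord. Qed.

Lemma take_pword (p : 'S_k.+2) :
  take k.+1 (pword p) = [seq (p (widen j)).+1 | j <- enum 'I_k.+1].
Proof.
rewrite /pword enum_ordSr map_rcons -map_comp -cats1 take_size_cat //.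
by rewrite size_map size_enum_ord.
Qed.

Lemma in_clusterP (p : 'S_k.+2) :
  reflect (forall j, \sum_(i < k.+1) (p (widen i) <= p (widen j)) = (tau j).+1)
          (p \in cluster).
Proof.
rewrite inE take_pword red_map_enum_ord /pword.
apply: (iffP eqP) => [/eq_in_map rank_p j | rank_p].
  exact: rank_p j (mem_enum _ _).
by apply/eq_in_map => j _ /=; rewrite rank_p.
Qed.

Lemma cluster_widen (p : 'S_k.+2) j :
  p \in cluster -> p (widen j) = lift (p ord_max) (tau j).
Proof.
move/in_clusterP => rank_p; apply: val_inj => /=.
(* The rank of p (widen j) is p (widen j) + 1 among all n letters and
   tau j + 1 among the first n-1, so the last letter decides the shift. *)
have := sum_perm_leq p (p (widen j)); rewrite big_ord_recr rank_p /=.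
have : p ord_max != p (widen j).
  by rewrite (inj_eq perm_inj) -(inj_eq val_inj) /= neq_ltn ltn_ord orbT.
rewrite -(inj_eq val_inj) /= /bump.
by case: leqP; case: leqP; lia.
Qed.

Definition cluster_fun (v i : 'I_k.+2) : 'I_k.+2 :=
  if unlift ord_max i is Some j then lift v (tau j) else v.

Lemma cluster_fun_inj v : injective (cluster_fun v).
Proof.
move=> x y; rewrite /cluster_fun.
case: (unliftP ord_max x) => [i ->|->]; case: (unliftP ord_max y) => [j ->|->] //.
- by move/lift_inj/perm_inj->.
- by move=> eq_v; have := neq_lift v (tau i); rewrite eq_v eqxx.
- by move=> eq_v; have := neq_lift v (tau j); rewrite -eq_v eqxx.
Qed.

Definition cluster_perm v : 'S_k.+2 := perm (@cluster_fun_inj v).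

Lemma cluster_perm_max v : cluster_perm v ord_max = v.
Proof. by rewrite permE /cluster_fun unlift_none. Qed.

Lemma cluster_perm_widen v j : cluster_perm v (widen j) = lift v (tau j).
Proof. by rewrite permE /cluster_fun widen_lift liftK. Qed.

Lemma cluster_perm_in v : cluster_perm v \in cluster.
Proof.
apply/in_clusterP => j.
under eq_bigr do rewrite !cluster_perm_widen leq_bump2.
by rewrite sum_perm_leq.
Qed.

Lemma in_cluster_perm (p : 'S_k.+2) :
  p \in cluster -> p = cluster_perm (p ord_max).
Proof.
move=> p_in; apply/permP => i.
case: (unliftP ord_max i) => [j ->|->]; last by rewrite cluster_perm_max.
by rewrite -widen_lift cluster_perm_widen cluster_widen.
Qed.

Lemma ends_adjacent_cluster_perm v :
  ends_adjacent (cluster_perm v) =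
  (v == tau ord0 :> nat) || (v == (tau ord0).+1 :> nat).
Proof.
rewrite ends_adjacentE; have -> : ord0 = widen ord0 by apply: val_inj.
by rewrite cluster_perm_max cluster_perm_widen bump_adjacent.
Qed.

Definition adjacent_in_cluster := [set p in cluster | ends_adjacent p].

Lemma adjacent_in_clusterE :
  adjacent_in_cluster =
  [set cluster_perm (widen (tau ord0)); cluster_perm (lift ord0 (tau ord0))].
Proof.
apply/setP => p; rewrite inE in_set2; apply/andP/orP => [[p_in]|].
  rewrite (in_cluster_perm p_in) ends_adjacent_cluster_perm.
  by case/orP => /eqP v_eq; [left|right]; apply/eqP; congr cluster_perm;
    apply: val_inj.
by case=> /eqP->; rewrite cluster_perm_in ends_adjacent_cluster_perm eqxx ?orbT.
Qed.

Lemma card_adjacent_in_cluster : #|adjacent_in_cluster| = 2.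
Proof.
rewrite adjacent_in_clusterE cards2; case: eqP => //.
move/(congr1 (fun p : 'S_k.+2 => val (p ord_max))).
by rewrite !cluster_perm_max /= /bump; lia.
Qed.

Lemma twins_in_cluster p s : p \in cluster -> s \in cluster ->
  twins p s = [&& p != s, ends_adjacent p & ends_adjacent s].
Proof. by rewrite /twins !inE => /eqP-> /eqP->; rewrite eqxx. Qed.

Lemma twin_pairs_inE :
  @twin_pairs_in k.+2 tau =
  [set P : {set 'S_k.+2} | (#|P| == 2) && (P \subset adjacent_in_cluster)].
Proof.
apply/setP => P; rewrite !inE; case: eqP => //= /eqP/cards2P [p [s [ps ->]]].
apply/andP/subsetP => [[sub_cluster /forall_inP twinsP] q|sub_adj].
  have [p_in s_in] : p \in cluster /\ s \in cluster.
    by split; apply: (subsetP sub_cluster); rewrite !inE eqxx ?orbT.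
  have /forall_inP/(_ s (set22 _ _))/implyP/(_ ps) := twinsP p (set21 _ _).
  rewrite twins_in_cluster // => /and3P [_ adj_p adj_s].
  by case/set2P=> ->; rewrite inE ?p_in ?s_in ?adj_p ?adj_s.
split; first by apply/subsetP => q /sub_adj; rewrite inE => /andP [].
apply/forall_inP => x /sub_adj; rewrite inE => /andP [x_in adj_x].
apply/forall_inP => y /sub_adj; rewrite inE => /andP [y_in adj_y].
by apply/implyP => xy; rewrite twins_in_cluster // xy adj_x adj_y.
Qed.

End Cluster.

Theorem lemma1 (n : nat) (hn : 2 <= n) (tau : 'S_(n.-1)) :
  #|twin_pairs_in tau| = 1.
Proof.
case: n hn tau => [|[|k]] // _ tau.
by rewrite twin_pairs_inE pairs_in_pair ?cards1 ?card_adjacent_in_cluster.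
Qed.
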